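(* Let $H$ be a real Hilbert space, $A:H\to2^H$ maximal monotone with $\mathrm{zer}A\ne\emptyset$, $(\gamma_n)$ a sequence in $(0,\infty)$ with $\sum_n\gamma_n^2=\infty$ and rate of divergence $\theta$, $x_0\in H$, $x_{n+1}=J_{\gamma_nA}x_n$, $u_n=(x_n-x_{n+1})/\gamma_n$, and $b>0$ with $b\ge\|x_0-p\|$ for some $p\in\mathrm{zer}A$. Then: (i) for every $k,L\in\mathbb{N}$ there exists $N$ with $L\le N\le\Delta(k,L,b):=\lceil b^2(k+1)^2\rceil+L-1$ and $\|x_N-x_{N+1}\|\le\frac1{k+1}$; (ii) $u_n\to0$ with rate of convergence $\beta(k,\theta,b):=\theta(\lceil b^2(k+1)^2\rceil)$, i.e. $\|u_n\|\le\frac1{k+1}$ for all $k$ and all $n\ge\beta(k,\theta,b)$.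
   Context: $J_{\gamma A}:=(Id+\gamma A)^{-1}$ is the resolvent. A rate of divergence for $\sum\gamma_n^2$ is $\theta:\mathbb{N}\to\mathbb{N}$ with $\sum_{i=0}^{\theta(n)}\gamma_i^2\ge n$ for all $n$. *)

From HB Require Import structures.
From mathcomp Require Import all_boot all_order all_algebra.
From mathcomp Require Import all_classical all_reals all_analysis.
Set Implicit Arguments. Unset Strict Implicit. Unset Printing Implicit Defensive.
Import Order.TTheory GRing.Theory Num.Theory.
Import numFieldNormedType.Exports.
Local Open Scope ring_scope.
Local Open Scope classical_set_scope.

(* [ip] is an inner product on the normed space V inducing its norm.
   Together with completeness of V (a completeNormedModType) this makes
   V a real Hilbert space. *)
Definition is_inner_product (R : realType) (V : normedModType R)
  (ip : V -> V -> R) : Prop :=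
  [/\ (forall x y, ip x y = ip y x),
      (forall (a : R) (x y z : V), ip (a *: x + y) z = a * ip x z + ip y z)
    & (forall x, `|x| = Num.sqrt (ip x x))].

Definition monotone_op (R : realType) (V : normedModType R)
  (ip : V -> V -> R) (A : V -> set V) : Prop :=
  forall x y u v, A x u -> A y v -> 0 <= ip (x - y) (u - v).

Definition maximal_monotone (R : realType) (V : normedModType R)
  (ip : V -> V -> R) (A : V -> set V) : Prop :=
  monotone_op ip A /\
  forall B : V -> set V, monotone_op ip B ->
    (forall x u, A x u -> B x u) -> forall x u, B x u -> A x u.

Definition zer (R : realType) (V : normedModType R) (A : V -> set V) : set V :=
  [set x | A x 0].

(* resolvent J_{gamma A} = (Id + gamma A)^{-1}, as a set-valued map:
   y \in J x  iff  x \in y + gamma A y *)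
Definition resolvent (R : realType) (V : normedModType R)
  (gamma : R) (A : V -> set V) : V -> set V :=
  fun x y => exists a, A y a /\ x = y + gamma *: a.

Definition rate_of_divergence (R : realType) (gamma : nat -> R)
  (theta : nat -> nat) : Prop :=
  forall n : nat, n%:R <= \sum_(i < (theta n).+1) gamma i ^+ 2.

(* ceiling as a natural number (used for nonnegative arguments) *)
Definition ceil_nat (R : realType) (x : R) : nat := `|Num.ceil x|%N.

From HB Require Import structures.
From mathcomp Require Import all_boot all_order all_algebra.
From mathcomp Require Import all_classical all_reals all_analysis.
From mathcomp Require Import lra zify.

Set Implicit Arguments.
Unset Strict Implicit.
Unset Printing Implicit Defensive.
Import Order.TTheory GRing.Theory Num.Theory.
Import numFieldNormedType.Exports.
Local Open Scope ring_scope.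
Local Open Scope classical_set_scope.

(* Writing x_n = x_{n+1} + gamma_n u_n with u_n in A x_{n+1}, monotonicity of A
   against a zero p gives the Fejer inequality
   |x_{n+1} - p|^2 + |x_n - x_{n+1}|^2 <= |x_n - p|^2, so the squared steps
   |x_n - x_{n+1}|^2 = gamma_n^2 |u_n|^2 have total sum at most b^2.
   (i) Among any ceil(b^2 (k+1)^2) consecutive squared steps one is therefore at
   most 1/(k+1)^2.  (ii) Monotonicity between consecutive iterates shows that
   |u_n| is nonincreasing, so |u_n|^2 sum_{i <= N} gamma_i^2 <= b^2 for N <= n;
   with N = theta(ceil(b^2 (k+1)^2)) the sum is at least b^2 (k+1)^2. *)

Section InnerProduct.
Variables (R : realType) (V : normedModType R) (ip : V -> V -> R).
Hypothesis hip : is_inner_product ip.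

Lemma ipC x y : ip x y = ip y x.
Proof. by case: hip. Qed.

Lemma ipDl x y z : ip (x + y) z = ip x z + ip y z.
Proof. by case: hip => _ ipl _; have := ipl 1 x y z; rewrite scale1r mul1r. Qed.

Lemma ipZl a x z : ip (a *: x) z = a * ip x z.
Proof.
case: hip => _ ipl _; have := ipl a x 0 z; have := ipDl (a *: x) 0 z.
by rewrite addr0; lra.
Qed.

Lemma ipBl x y z : ip (x - y) z = ip x z - ip y z.
Proof. by rewrite ipDl -scaleN1r ipZl mulN1r. Qed.

Lemma ipBr x y z : ip z (x - y) = ip z x - ip z y.
Proof. by rewrite ipC ipBl -!(ipC z). Qed.

Lemma ip_ge0 x : 0 <= ip x x.
Proof.
rewrite leNgt; apply/negP => ltx0.
case: hip => _ _ /(_ x); rewrite ltr0_sqrtr // => /normr0_eq0 x0.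
by move: ltx0; rewrite x0 -(scale0r (0 : V)) ipZl mul0r ltxx.
Qed.

Lemma sqr_norm_ip x : `|x| ^+ 2 = ip x x.
Proof. by case: hip => _ _ ->; rewrite sqr_sqrtr // ip_ge0. Qed.

Lemma sqr_normD x y : `|x + y| ^+ 2 = `|x| ^+ 2 + 2 * ip x y + `|y| ^+ 2.
Proof.
by rewrite !sqr_norm_ip !ipDl -!(ipC (x + y)) !ipDl (ipC y x); lra.
Qed.

Lemma norm_le_of_ip u v : ip v v <= ip u v -> `|v| <= `|u|.
Proof.
move=> hvu; rewrite -(ler_sqr (normr_ge0 _) (normr_ge0 _)) !sqr_norm_ip.
have := ip_ge0 (u - v); rewrite !ipBl !ipBr (ipC v u); lra.
Qed.

End InnerProduct.

Section Resolvent.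
Variables (R : realType) (V : normedModType R) (ip : V -> V -> R).
Variable A : V -> set V.
Hypotheses (hip : is_inner_product ip) (hmon : monotone_op ip A).

Lemma resolvent_residual g x y : 0 < g -> resolvent g A x y ->
  A y (g^-1 *: (x - y)).
Proof.
move=> g0 [a [Aya ->]].
by rewrite (addrC y (g *: a)) addrK scalerA mulVf ?gt_eqF // scale1r.
Qed.

Lemma resolvent_fejer g x y p : 0 < g -> resolvent g A x y -> zer A p ->
  `|y - p| ^+ 2 + `|x - y| ^+ 2 <= `|x - p| ^+ 2.
Proof.
move=> g0 [a [Aya ->]] Ap0.
have ->: y + g *: a - p = (y - p) + g *: a by rewrite addrAC.
rewrite (addrC y (g *: a)) addrK (sqr_normD hip (y - p)) (ipC hip) (ipZl hip).
have := hmon Aya Ap0; rewrite subr0 (ipC hip) => mon.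
have := mulr_ge0 (ltW g0) mon; lra.
Qed.

Lemma resolvent_residual_le g g' x y z : 0 < g -> 0 < g' ->
  resolvent g A x y -> resolvent g' A y z ->
  `|g'^-1 *: (y - z)| <= `|g^-1 *: (x - y)|.
Proof.
move=> g0 g'0 Jxy Jyz.
have yzE : y - z = g' *: (g'^-1 *: (y - z)).
  by rewrite scalerA divff ?gt_eqF // scale1r.
move: (g^-1 *: _) (g'^-1 *: _) yzE (resolvent_residual g0 Jxy)
  (resolvent_residual g'0 Jyz) => u v yzE Ayu Azv.
have := hmon Ayu Azv; rewrite yzE (ipZl hip) pmulr_rge0 // (ipBr hip) subr_ge0 (ipC hip v u).
exact: norm_le_of_ip.
Qed.

End Resolvent.

Lemma ceil_nat_ge (R : realType) (x : R) : x <= (ceil_nat x)%:R.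
Proof.
by rewrite /ceil_nat natr_absz intr_norm; apply: le_trans (ceil_ge _) (ler_norm _).
Qed.

Lemma exists_le_of_sum_le (R : realDomainType) (f : nat -> R) (c B : R) L m :
  (0 < m)%N -> \sum_(L <= i < L + m) f i <= B -> B <= c *+ m ->
  exists2 N, (L <= N < L + m)%N & f N <= c.
Proof.
move=> m0 sumB Bc; apply: contrapT => no_small.
have small i : (L <= i < L + m)%N -> c < f i.
  by move=> iLm; rewrite ltNge; apply/negP => fic; apply: no_small; exists i.
have Lm : (L < L + m)%N by rewrite -addn1 leq_add2l.
by have := ltr_sum_nat Lm small; rewrite sumr_const_nat addKn ltNge (le_trans sumB Bc).
Qed.

Section ProximalPoint.
Variables (R : realType) (V : normedModType R) (ip : V -> V -> R).
Variables (A : V -> set V) (gamma : nat -> R) (x : nat -> V) (p : V) (b : R).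
Hypotheses (hip : is_inner_product ip) (hmon : monotone_op ip A).
Hypotheses (gamma_gt0 : forall n, 0 < gamma n)
  (hres : forall n, resolvent (gamma n) A (x n) (x n.+1)).
Hypotheses (zp : zer A p) (x0p : `|x 0%N - p| <= b).

Let u n := (gamma n)^-1 *: (x n - x n.+1).

Lemma prox_step_sqr n : `|x n - x n.+1| ^+ 2 = gamma n ^+ 2 * `|u n| ^+ 2.
Proof.
by rewrite /u normrZ -exprMn mulrA gtr0_norm ?invr_gt0 // divff ?gt_eqF ?mul1r.
Qed.

Lemma prox_sum_steps L m :
  \sum_(L <= i < L + m) `|x i - x i.+1| ^+ 2 + `|x (L + m)%N - p| ^+ 2
  <= `|x L - p| ^+ 2.
Proof.
elim: m => [|m IH]; first by rewrite addn0 big_geq // add0r.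
rewrite addnS big_nat_recr ?leq_addr //=.
have := resolvent_fejer hip hmon (gamma_gt0 (L + m)) (hres (L + m)) zp; lra.
Qed.

Lemma prox_dist_le n : `|x n - p| ^+ 2 <= b ^+ 2.
Proof.
have x0p2 : `|x 0%N - p| ^+ 2 <= b ^+ 2.
  by rewrite ler_sqr ?nnegrE ?(le_trans (normr_ge0 _) x0p).
apply: le_trans x0p2; have := prox_sum_steps 0 n.
have : 0 <= \sum_(0 <= i < n) `|x i - x i.+1| ^+ 2 by rewrite sumr_ge0.
by rewrite add0n; lra.
Qed.

Lemma prox_sum_steps_le L m :
  \sum_(L <= i < L + m) `|x i - x i.+1| ^+ 2 <= b ^+ 2.
Proof.
have := prox_sum_steps L m; have := prox_dist_le L.
have := sqr_ge0 `|x (L + m)%N - p|; lra.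
Qed.

Lemma prox_residual_le i n : (i <= n)%N -> `|u n| <= `|u i|.
Proof.
elim: n => [|n IH]; first by rewrite leqn0 => /eqP ->.
rewrite leq_eqVlt ltnS => /predU1P [-> // | /IH].
by apply: le_trans; apply: (resolvent_residual_le hip hmon).
Qed.

Lemma prox_residual_sum_le N n : (N <= n)%N ->
  `|u n| ^+ 2 * \sum_(i < N.+1) gamma i ^+ 2 <= b ^+ 2.
Proof.
move=> Nn; apply: le_trans (prox_sum_steps_le 0 N.+1).
rewrite add0n big_mkord mulr_sumr; apply: ler_sum => i _.
rewrite prox_step_sqr mulrC ler_wpM2l ?sqr_ge0 // ler_sqr ?nnegrE //.
by apply: prox_residual_le; rewrite (leq_trans _ Nn) // -ltnS.
Qed.

End ProximalPoint.

Theorem lemma8p3 (R : realType) (V : completeNormedModType R)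
  (ip : V -> V -> R) (A : V -> set V) (gamma : nat -> R) (theta : nat -> nat)
  (x : nat -> V) (b : R) :
  is_inner_product ip ->
  maximal_monotone ip A ->
  zer A !=set0 ->
  (forall n, 0 < gamma n) ->
  (fun n => \sum_(i < n) gamma i ^+ 2) @ \oo --> +oo ->
  rate_of_divergence gamma theta ->
  (forall n, resolvent (gamma n) A (x n) (x n.+1)) ->
  0 < b ->
  (exists2 p, zer A p & `|x 0%N - p| <= b) ->
  (forall k L : nat, exists N : nat,
      [/\ (L <= N)%N, (N <= ceil_nat (b ^+ 2 * (k.+1%:R) ^+ 2) + L - 1)%N
        & `|x N - x N.+1| <= (k.+1%:R)^-1])
  /\
  (forall k n : nat, (theta (ceil_nat (b ^+ 2 * (k.+1%:R) ^+ 2)) <= n)%N ->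
      `|(gamma n)^-1 *: (x n - x n.+1)| <= (k.+1%:R)^-1).
Proof.
move=> hip [hmon _] _ gamma_gt0 _ hrate hres b0 [p zp x0p].
have mk_ge k : b ^+ 2 * k.+1%:R ^+ 2 <= (ceil_nat (b ^+ 2 * k.+1%:R ^+ 2))%:R.
  exact: ceil_nat_ge.
have le_inv k (y : R) : 0 <= y -> y ^+ 2 * k.+1%:R ^+ 2 <= 1 -> y <= (k.+1%:R)^-1.
  move=> y0; rewrite -exprMn -[X in _ <= X](expr1n _ 2) ler_sqr ?nnegrE ?mulr_ge0 //.
  by rewrite -[_^-1]mul1r ler_pdivlMr ?ltr0n.
split=> [k L | k n].
- set m := ceil_nat _.
  have m_gt0 : (0 < m)%N.
    by rewrite -(ltr0n R) (lt_le_trans _ (mk_ge k)) // mulr_gt0 ?exprn_gt0.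
  have [|N /andP[LN NLm] hN] := exists_le_of_sum_le (c := (k.+1%:R ^+ 2)^-1) m_gt0
    (prox_sum_steps_le hip hmon gamma_gt0 hres zp x0p L m).
    by rewrite -[_ *+ m]mulr_natr mulrC ler_pdivlMr.
  exists N; split=> //; first by lia.
  by apply: le_inv; rewrite // -ler_pdivlMr // mul1r.
- move=> hn; apply: le_inv => //.
  have hS := le_trans (mk_ge k) (hrate (ceil_nat (b ^+ 2 * k.+1%:R ^+ 2))).
  rewrite -(ler_pM2l (exprn_gt0 2 b0)) mulr1 mulrCA.
  exact: le_trans (ler_wpM2l (sqr_ge0 _) hS)
    (prox_residual_sum_le hip hmon gamma_gt0 hres zp x0p hn).
Qed.
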